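(* Let $\mathcal{K}$ be a finite set of oriented knots closed under the action of the group $\mathcal{G}=\{1,r,m,rm\}$, and let $\mathcal{R}$ be a set of representatives of the $\mathcal{G}$-orbits in $\mathcal{K}$. Let $\mathcal{S}=(Q_1,\dots,Q_n)$ be a list of finite quandles, let $C(K)=(\mathrm{Col}_{Q_1}(K),\dots,\mathrm{Col}_{Q_n}(K))$, and write $K\sim K'$ iff $C(K)=C(K')$. Suppose that for all $k,k'\in\mathcal{R}$: (A) if $k\neq k'$ then $k\not\sim k'$; (B) if $k\neq k'$ then $k\not\sim m(k')$; (C) if $k\neq k'$ then $m(k)\not\sim m(k')$. Then for all $K,K'\in\mathcal{K}$ with $K\sim K'$ we have $\mathcal{G}(K)=\mathcal{G}(K')$. If in addition (D) $m(k)\not\sim k$ for every $k\in\mathcal{R}$ that is chiral or negative amphicheiral, then for all $K,K'\in\mathcal{K}$ with $K\sim K'$ we have $K'=K$ or $K'=rm(K)$.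
   Context: A quandle is a set $X$ with a binary operation $*$ such that $a*a=a$ for all $a$; for all $b,c$ there is a unique $a$ with $a*b=c$; and $(a*b)*c=(a*c)*(b*c)$. A coloring of an oriented knot diagram by a quandle $X$ is a map from arcs to $X$ such that at each crossing with over-arc colored $y$, the under-arc on one side (fixed convention depending on the over-arc orientation) colored $x$ forces the other under-arc to be colored $x*y$; equivalently a quandle homomorphism from the fundamental quandle of the knot to $X$. $\mathrm{Col}_Q(K)$ is the number of colorings of $K$ by $Q$, a knot invariant. $m(K)$ denotes the mirror image of $K$, $r(K)$ denotes $K$ with reversed orientation, and $K=K'$ means equality up to orientation-preserving homeomorphism of $S^3$ respecting knot orientations. $\mathcal{G}=\{1,r,m,rm\}$ acts on knot types and $\mathcal{G}(K)=\{K,r(K),m(K),rm(K)\}$ is the orbit. $K$ is chiral if none of $K=r(K)$, $K=m(K)$, $K=rm(K)$ holds; $K$ is negative amphicheiral if its only symmetry is $K=rm(K)$. *)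

(* Knots are modelled combinatorially as closed braids
   (Alexander's theorem) and knot equality as Markov equivalence
   (Markov's theorem). *)
From mathcomp Require Import all_boot.
Set Implicit Arguments. Unset Strict Implicit. Unset Printing Implicit Defensive.

Record fquandle := FQuandle {
  qcar :> finType;
  qop : qcar -> qcar -> qcar;
  qidem : forall a, qop a a = a;
  qrinv : forall b c, exists! a, qop a b = c;
  qdist : forall a b c, qop (qop a b) c = qop (qop a c) (qop b c)
}.

Definition qrdiv (Q : fquandle) (c b : Q) : Q :=
  odflt c [pick a : Q | qop a b == c].

(* A letter (i, true) is sigma_i, (i, false) is sigma_i^{-1} (0-based,
   acting on strands i and i+1).  A braid is (number of strands, word). *)
Definition letter := (nat * bool)%type.
Definition braid := (nat * seq letter)%type.

Definition bwf (b : braid) : Prop :=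
  0 < b.1 /\ all (fun l : letter => l.1.+1 < b.1) b.2.

Definition lperm (l : letter) (j : nat) : nat :=
  if j == l.1 then l.1.+1 else if j == l.1.+1 then l.1 else j.

Definition bperm (b : braid) (j : nat) : nat :=
  foldl (fun k l => lperm l k) j b.2.

(* the closure of b is a knot: well formed, permutation an n-cycle *)
Definition is_knot (b : braid) : Prop :=
  bwf b /\ forall j, j < b.1 -> exists t, iter t (bperm b) 0 = j.

Inductive mstep : braid -> braid -> Prop :=
| ms_cancel n u v i s :
    mstep (n, u ++ (i, s) :: (i, ~~ s) :: v) (n, u ++ v)
| ms_comm n u v i j : i.+1 < j ->
    mstep (n, u ++ (i, true) :: (j, true) :: v) (n, u ++ (j, true) :: (i, true) :: v)
| ms_braid n u v i :
    mstep (n, u ++ [:: (i, true); (i.+1, true); (i, true)] ++ v)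
          (n, u ++ [:: (i.+1, true); (i, true); (i.+1, true)] ++ v)
| ms_conj n u v : mstep (n, u ++ v) (n, v ++ u)
| ms_stab n w s : 0 < n -> mstep (n, w) (n.+1, rcons w (n.-1, s)).

Inductive keq : braid -> braid -> Prop :=
| keq_refl b : keq b b
| keq_sym a b : keq a b -> keq b a
| keq_trans a b c : keq a b -> keq b c -> keq a c
| keq_step a b : bwf a -> bwf b -> mstep a b -> keq a b.

Definition bmirror (b : braid) : braid := (b.1, map (fun l : letter => (l.1, ~~ l.2)) b.2).
Definition brev (b : braid) : braid := (b.1, rev b.2).

Inductive gsym := gId | gR | gM | gRM.
Definition gact (g : gsym) (b : braid) : braid :=
  match g with gId => b | gR => brev b | gM => bmirror b | gRM => brev (bmirror b) end.

(* orbit equality G(K) = G(K') as sets of knot types *)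
Definition same_orbit (K K' : braid) : Prop :=
  forall X, (exists g, keq X (gact g K)) <-> (exists g, keq X (gact g K')).

Definition chiral (K : braid) : Prop :=
  ~ keq K (brev K) /\ ~ keq K (bmirror K) /\ ~ keq K (brev (bmirror K)).
Definition neg_amphicheiral (K : braid) : Prop :=
  keq K (brev (bmirror K)) /\ ~ keq K (brev K) /\ ~ keq K (bmirror K).

Definition act_letter (Q : fquandle) (l : letter) (x : seq Q) : seq Q :=
  match drop l.1 x with
  | a :: c :: post =>
      take l.1 x ++ (if l.2 then [:: c; qop a c] else [:: qrdiv c a; a]) ++ post
  | _ => x
  end.

Definition act (Q : fquandle) (w : seq letter) (x : seq Q) : seq Q :=
  foldl (fun y l => act_letter l y) x w.

(* Col_Q(closure b): colorings of the closed braid = fixed color vectors *)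
Definition col (Q : fquandle) (b : braid) : nat :=
  #|[pred t : (b.1).-tuple Q | act b.2 (val t) == val t]|.

Definition colvec (S : seq fquandle) (K : braid) : seq nat := map (fun Q => col Q K) S.
Definition csim (S : seq fquandle) (K K' : braid) : Prop := colvec S K = colvec S K'.

Definition inK (Ks : seq braid) (K : braid) : Prop := exists2 K0, K0 \in Ks & keq K K0.

Definition G_closed_knot_set (Ks : seq braid) : Prop :=
  (forall K, K \in Ks -> is_knot K) /\
  (forall K g, inK Ks K -> inK Ks (gact g K)).

Definition orbit_reps (Ks Rs : seq braid) : Prop :=
  (forall k, k \in Rs -> inK Ks k) /\
  (forall K, inK Ks K -> exists k g, k \in Rs /\ keq K (gact g k)) /\
  (forall k k' g, k \in Rs -> k' \in Rs -> keq k' (gact g k) -> keq k k').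

(* A colouring of a closed braid is a fixed point of the braid's action on
   colour vectors.  The number of fixed points is unchanged by the braid
   relations, by conjugation (fixed points of f o g and g o f correspond) and
   by stabilization (the new strand must repeat the last colour), so Col_Q is
   an invariant of Markov equivalence.  The braid of rm(K) is the inverse
   word, whose action has the same fixed points, hence Col_Q(rm K) = Col_Q(K)
   and C(g k) is C(k) or C(m k) according as g lies in {1, rm} or {r, m}.
   Hypotheses (A)-(C) therefore force knots with equal coloring vectors to
   lie over one representative k.  If their symmetries differ by r or m,
   then C(m k) = C(k), so by (D) k is invertible or positive amphicheiral,
   and r(k) and m(k) both fall into {k, rm k}. *)

From mathcomp Require Import all_boot.
From Stdlib Require Import Classical.
Set Implicit Arguments. Unset Strict Implicit. Unset Printing Implicit Defensive.

Definition wf_word n (w : seq letter) := all (fun l : letter => l.1.+1 < n) w.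

Lemma wf_word_cat n u v : wf_word n (u ++ v) = wf_word n u && wf_word n v.
Proof. exact: all_cat. Qed.

Section QuandleAction.
Variable Q : fquandle.

Lemma qrdivP (c b : Q) : qop (qrdiv c b) b = c.
Proof.
rewrite /qrdiv; case: pickP => [a /eqP // | no_sol]; exfalso.
have [a [Ha _]] := qrinv b c; by have := no_sol a; rewrite Ha eqxx.
Qed.

Lemma qop_inj (b : Q) : injective (fun a : Q => qop a b).
Proof.
move=> a a' E; have [x [_ uniq_x]] := qrinv b (qop a b).
by rewrite -(uniq_x a erefl) -(uniq_x a' (esym E)).
Qed.

Lemma qrdivK (a b : Q) : qrdiv (qop a b) b = a.
Proof. by apply: (@qop_inj b); rewrite qrdivP. Qed.

Lemma qrdivii (a : Q) : qrdiv a a = a.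
Proof. by rewrite -{1}(qidem a) qrdivK. Qed.

Lemma size_act_letter l (x : seq Q) : size (act_letter l x) = size x.
Proof.
rewrite /act_letter; have := size_cat (take l.1 x) (drop l.1 x).
rewrite cat_take_drop; case: (drop l.1 x) => [|a [|c post]] // ->.
by rewrite !size_cat; case: l.2.
Qed.

Lemma size_act w (x : seq Q) : size (act w x) = size x.
Proof. by elim: w x => //= l w IH x; rewrite IH size_act_letter. Qed.

Lemma act_cat u v (x : seq Q) : act (u ++ v) x = act v (act u x).
Proof. by rewrite /act foldl_cat. Qed.

Lemma act_rcons w l (x : seq Q) : act (rcons w l) x = act_letter l (act w x).
Proof. by rewrite /act foldl_rcons. Qed.

Lemma act_letter_catr i s (p q : seq Q) : size p <= i ->
  act_letter (i, s) (p ++ q) = p ++ act_letter (i - size p, s) q.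
Proof.
move=> Hp; rewrite /act_letter /= drop_cat take_cat ltnNge Hp /=.
by case: (drop (i - size p) q) => [|a [|c post]] //; rewrite -catA.
Qed.

Lemma act_letter_catl i s (p q : seq Q) : i.+1 < size p ->
  act_letter (i, s) (p ++ q) = act_letter (i, s) p ++ q.
Proof.
move=> Hp; rewrite /act_letter /= drop_cat take_cat ltnW //.
have : 1 < size (drop i p) by rewrite size_drop ltn_subRL addn1.
by case: (drop i p) => [|a [|c post]] //= _; rewrite -!catA.
Qed.

Lemma act_letter_small i s (x : seq Q) : size x <= i.+1 -> act_letter (i, s) x = x.
Proof.
move=> Hx; rewrite /act_letter /=.
have : size (drop i x) <= 1 by rewrite size_drop leq_subLR addn1.
by case: (drop i x) => [|a [|c post]].
Qed.

Lemma act_catl w (p q : seq Q) : wf_word (size p) w ->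
  act w (p ++ q) = act w p ++ q.
Proof.
elim: w p => //= [[i s]] w IH p /andP [Hi Hw].
by rewrite act_letter_catl // IH // size_act_letter.
Qed.

Lemma split_at i (x : seq Q) : i <= size x -> exists p q, size p = i /\ x = p ++ q.
Proof.
move=> Hi; exists (take i x), (drop i x); split; last by rewrite cat_take_drop.
by rewrite size_take; case: ltngtP Hi => // ->.
Qed.

Lemma act_letterK i s (x : seq Q) : act_letter (i, ~~ s) (act_letter (i, s) x) = x.
Proof.
case: (leqP (size x) i.+1) => Hx; first by rewrite !act_letter_small // size_act_letter.
have [p [q [Sp Ex]]] := split_at (ltnW (ltnW Hx)); subst x.
rewrite !act_letter_catr ?Sp // subnn; congr (_ ++ _).
move: Hx; rewrite size_cat Sp -addn2 leq_add2l.
by case: q => [|a [|c post]] //= _; case: s; rewrite /act_letter /= ?qrdivK ?qrdivP.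
Qed.

Lemma act_letter_comm i j (x : seq Q) : i.+1 < j ->
  act_letter (j, true) (act_letter (i, true) x) =
  act_letter (i, true) (act_letter (j, true) x).
Proof.
move=> Hij; case: (leqP (size x) i.+1) => Hx.
  have Hj : size x <= j.+1 by rewrite (leq_trans Hx) // ltnW // ltnW.
  by rewrite !act_letter_small ?size_act_letter.
have [p [q [Sp Ex]]] := split_at Hx; subst x.
rewrite act_letter_catl ?Sp // (act_letter_catr (i := j)) ?size_act_letter ?Sp //.
by rewrite (act_letter_catr (i := j)) ?Sp // act_letter_catl ?Sp.
Qed.

Lemma act_letter_braid i (x : seq Q) : i.+2 < size x ->
  act_letter (i, true) (act_letter (i.+1, true) (act_letter (i, true) x)) =
  act_letter (i.+1, true) (act_letter (i, true) (act_letter (i.+1, true) x)).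
Proof.
move=> Hx; have [p [q [Sp Ex]]] := split_at (ltnW (ltnW (ltnW Hx))); subst x.
rewrite !act_letter_catr ?Sp ?leqnSn // subnn subSnn.
move: Hx; rewrite size_cat Sp -addn3 leq_add2l.
by case: q => [|a [|b [|c post]]] //= _; rewrite /act_letter /= qdist.
Qed.

End QuandleAction.

Definition flip (l : letter) : letter := (l.1, ~~ l.2).
Definition winv (w : seq letter) : seq letter := rev (map flip w).

Lemma winv_cons l w : winv (l :: w) = rcons (winv w) (flip l).
Proof. by rewrite /winv rev_cons. Qed.

Lemma wf_word_flip n w : wf_word n (map flip w) = wf_word n w.
Proof. by rewrite /wf_word all_map. Qed.

Lemma wf_word_winv n w : wf_word n (winv w) = wf_word n w.
Proof. by rewrite /wf_word /winv all_rev all_map. Qed.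

Lemma winvK : involutive winv.
Proof.
move=> w; rewrite /winv map_rev revK -map_comp.
by elim: w => //= [[i s]] w ->; rewrite /flip negbK.
Qed.

Section Colorings.
Variables (Q : fquandle) (n : nat).

Lemma actK w : cancel (@act Q w) (act (winv w)).
Proof.
elim: w => //= [[i s]] w IH x.
by rewrite winv_cons act_rcons IH act_letterK.
Qed.

Lemma actKV w : cancel (act (winv w)) (@act Q w).
Proof. by move=> x; rewrite -{1}(winvK w) actK. Qed.

Definition tact w (t : n.-tuple Q) : n.-tuple Q := insubd t (act w t).

Lemma tactE w t : val (tact w t) = act w (val t).
Proof. by rewrite /tact insubdK // unfold_in size_act size_tuple. Qed.

Lemma tact_cat u v t : tact (u ++ v) t = tact v (tact u t).
Proof. by apply: val_inj; rewrite !tactE act_cat. Qed.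

Lemma tactK w : cancel (tact w) (tact (winv w)).
Proof. by move=> t; apply: val_inj; rewrite !tactE actK. Qed.

Lemma tactKV w : cancel (tact (winv w)) (tact w).
Proof. by move=> t; apply: val_inj; rewrite !tactE actKV. Qed.

Lemma colE w : col Q (n, w) = #|[pred t | tact w t == t]|.
Proof. by apply: eq_card => t; rewrite !inE -val_eqE tactE. Qed.

Lemma eq_col w1 w2 : (forall x : seq Q, size x = n -> act w1 x = act w2 x) ->
  col Q (n, w1) = col Q (n, w2).
Proof. by move=> E; apply: eq_card => t; rewrite !inE E // size_tuple. Qed.

Lemma col_winv w : col Q (n, winv w) = col Q (n, w).
Proof.
rewrite !colE; apply: eq_card => t; rewrite !inE.
by apply/eqP/eqP => E; rewrite -{1}E ?tactKV ?tactK.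
Qed.

Lemma col_rot u v : col Q (n, u ++ v) = col Q (n, v ++ u).
Proof.
rewrite !colE.
have fixed_le (a b : seq letter) :
    #|[pred t | tact (a ++ b) t == t]| <= #|[pred t | tact (b ++ a) t == t]|.
  rewrite -(card_imset _ (can_inj (tactK a))); apply/subset_leq_card/subsetP.
  move=> y /imsetP [t]; rewrite !inE !tact_cat => /eqP fix_t ->.
  by rewrite fix_t.
by apply/eqP; rewrite eqn_leq !fixed_le.
Qed.

End Colorings.

Section Stabilization.
Variable Q : fquandle.

Lemma act_stab_fixed m s w (p : seq Q) z : size p = m.+1 ->
  wf_word m.+1 w ->
  (act (rcons w (m, s)) (rcons p z) == rcons p z) = (act w p == p) && (z == last z p).
Proof.
case/lastP: p => [//|p a] Sp Hw.
rewrite act_rcons -cats1 act_catl ?Sp // last_rcons.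
have := size_act w (rcons p a); rewrite Sp.
case/lastP: (act w (rcons p a)) => [//|y b] Sy.
have Sy' : size y = m by move: Sy; rewrite size_rcons => -[].
have Sp' : size p = m by move: Sp; rewrite size_rcons => -[].
rewrite cat_rcons act_letter_catr ?Sy' // subnn cats1 -cats1 cat_rcons.
rewrite eqseq_cat ?Sy' ?Sp' // eqseq_rcons; case: (y == p) => //=.
case: s; rewrite /act_letter /= !eqseq_cons andbT.
- apply/andP/andP => [[/eqP Ez /eqP E] | [/eqP -> /eqP ->]]; last by rewrite qidem.
  by subst z; rewrite eqxx; split=> //; apply/eqP/(@qop_inj _ a); rewrite E qidem.
- apply/andP/andP => [[/eqP E /eqP Eb] | [/eqP -> /eqP ->]].
    by subst b; rewrite -E qrdivii eqxx.
  by rewrite qrdivii.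
Qed.

Lemma col_stab m s w : wf_word m.+1 w ->
  col Q (m.+1, w) = col Q (m.+2, rcons w (m, s)).
Proof.
move=> Hw.
pose ext (t : m.+1.-tuple Q) : m.+2.-tuple Q := [tuple of rcons t (last (thead t) t)].
have ext_inj : injective ext by move=> t1 t2 /(congr1 val) /rcons_inj [? _]; exact: val_inj.
rewrite /col /= -(card_imset _ ext_inj); apply: eq_card => t'; rewrite inE.
have last_any (d1 d2 : Q) (p : seq Q) : 0 < size p -> last d1 p = last d2 p by case: p.
apply/imsetP/idP => [[t Ht ->] | fixed].
  rewrite inE in Ht; rewrite /= act_stab_fixed ?size_tuple // Ht.
  by rewrite (last_any (last (thead t) t) (thead t)) ?size_tuple ?eqxx.
have Et : val t' = rcons (belast (thead t') (behead t')) (last (thead t') (behead t')).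
  by rewrite -lastI {1}(tuple_eta t').
move: fixed; rewrite Et act_stab_fixed ?size_belast ?size_behead ?size_tuple //.
case/andP => fixed /eqP Elast.
exists [tuple of belast (thead t') (behead t')]; first by rewrite inE.
apply: val_inj; rewrite /= {1}Et; congr rcons.
by rewrite Elast; apply: last_any; rewrite size_belast size_behead size_tuple.
Qed.

End Stabilization.

Lemma bwf_cat3 n u x v : 0 < n -> wf_word n u -> wf_word n x -> wf_word n v ->
  bwf (n, u ++ x ++ v).
Proof. by move=> n0 Hu Hx Hv; split; rewrite //= !all_cat; apply/and3P. Qed.

Lemma bwf_cat3P n u x v :
  bwf (n, u ++ x ++ v) -> [/\ 0 < n, wf_word n u, wf_word n x & wf_word n v].
Proof. by case=> n0; rewrite /= !all_cat => /and3P []. Qed.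

Lemma col_mstep (Q : fquandle) a b : bwf a -> mstep a b -> col Q a = col Q b.
Proof.
move=> Ha step.
case: a b / step Ha => [n u v i s | n u v i j Hij | n u v i | n u v | n w s _] Ha.
- by apply: eq_col => x _; rewrite !act_cat /= act_letterK.
- by apply: eq_col => x _; rewrite !act_cat /= act_letter_comm.
- apply: eq_col => x Sx; rewrite !act_cat /= act_letter_braid // size_act Sx.
  have [_ _ /and4P [_ Hi _ _] _] :=
    bwf_cat3P (x := [:: (i, true); (i.+1, true); (i, true)]) Ha.
  exact: Hi.
- exact: col_rot.
- by case: n Ha => [[] // | m [_ Hw]]; exact: col_stab.
Qed.

Lemma col_keq (Q : fquandle) a b : keq a b -> col Q a = col Q b.
Proof. by elim=> [// | x y _ -> | x y z _ -> _ -> | x y Hx _ /(col_mstep Q Hx)]. Qed.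


Section WordMoves.
Variable n : nat.
Hypothesis n_gt0 : 0 < n.

Lemma keq_cancel u v l : wf_word n u -> wf_word n v -> l.1.+1 < n ->
  keq (n, u ++ l :: flip l :: v) (n, u ++ v).
Proof.
case: l => i s Hu Hv /= Hi; apply: keq_step; last exact: ms_cancel.
  by apply: (bwf_cat3 (x := [:: (i, s); (i, ~~ s)])); rewrite //= Hi.
by apply: (bwf_cat3 (x := [::])).
Qed.

Lemma keq_insert_winv w u v : wf_word n u -> wf_word n v -> wf_word n w ->
  keq (n, u ++ v) (n, u ++ w ++ winv w ++ v).
Proof.
elim: w u v => [|l w IH] u v Hu Hv /=; first by move=> _; exact: keq_refl.
case/andP=> Hl Hw; rewrite winv_cons -cats1 -!catA -cat1s catA.
apply: keq_trans (IH _ _ _ _ Hw); last by rewrite /= Hl.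
  by apply: keq_sym; rewrite -catA; apply: keq_cancel.
by rewrite wf_word_cat Hu /= Hl.
Qed.

(* Mirroring turns the positive commutation and braid relators into negative
   ones, which are Markov moves only through this lemma. *)
Lemma keq_winv_context x y : wf_word n x -> wf_word n y ->
  (forall u v, wf_word n u -> wf_word n v -> keq (n, u ++ x ++ v) (n, u ++ y ++ v)) ->
  forall u v, wf_word n u -> wf_word n v -> keq (n, u ++ winv x ++ v) (n, u ++ winv y ++ v).
Proof.
move=> Hx Hy xy u v Hu Hv.
have Hx' : wf_word n (winv x) by rewrite wf_word_winv.
have Hy' : wf_word n (winv y) by rewrite wf_word_winv.
have Huy : wf_word n (u ++ winv y) by rewrite wf_word_cat Hu.
have Hxv : wf_word n (winv x ++ v) by rewrite wf_word_cat Hx'.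
have ins_y : keq (n, u ++ winv x ++ v) (n, (u ++ winv y) ++ y ++ (winv x ++ v)).
  by have := keq_insert_winv Hu Hxv Hy'; rewrite winvK -!catA.
have del_x : keq (n, (u ++ winv y) ++ x ++ winv x ++ v) (n, u ++ winv y ++ v).
  by apply: keq_sym; rewrite [u ++ winv y ++ v]catA; exact: keq_insert_winv.
exact: keq_trans ins_y (keq_trans (keq_sym (xy _ _ Huy Hxv)) del_x).
Qed.

End WordMoves.

Lemma bwf_mirror b : bwf b -> bwf (bmirror b).
Proof. by case: b => n w [n0 Hw]; split; rewrite //= all_map. Qed.

Lemma bwf_rev b : bwf b -> bwf (brev b).
Proof. by case: b => n w [n0 Hw]; split; rewrite //= all_rev. Qed.


Lemma keq_relator n x y : 0 < n -> wf_word n x -> wf_word n y ->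
  (forall u v, mstep (n, u ++ x ++ v) (n, u ++ y ++ v)) ->
  forall u v, wf_word n u -> wf_word n v -> keq (n, u ++ x ++ v) (n, u ++ y ++ v).
Proof. by move=> n0 Hx Hy xy u v Hu Hv; apply: keq_step (xy u v); exact: bwf_cat3. Qed.

Lemma mstep_mirror a b : bwf a -> bwf b -> mstep a b -> keq (bmirror a) (bmirror b).
Proof.
move=> Ha Hb step; have Ha' := bwf_mirror Ha; have Hb' := bwf_mirror Hb.
case: a b / step Ha Hb Ha' Hb' => [n u v i s | n u v i j Hij | n u v i | n u v | n w s n0].
- move=> _ _ Ha' Hb'; apply: keq_step Ha' Hb' _.
  by rewrite /bmirror /= !map_cat; exact: ms_cancel.
- move=> Ha Hb _ _; apply: keq_sym.
  have [n0 Hu Hx Hv] := bwf_cat3P (x := [:: (i, true); (j, true)]) Ha.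
  have [_ _ Hy _] := bwf_cat3P (x := [:: (j, true); (i, true)]) Hb.
  have := keq_winv_context n0 Hx Hy (keq_relator n0 Hx Hy (fun u v => ms_comm n u v Hij)).
  by rewrite /bmirror /= !map_cat; apply; rewrite wf_word_flip.
- move=> Ha Hb _ _.
  have [n0 Hu Hx Hv] := bwf_cat3P (x := [:: (i, true); (i.+1, true); (i, true)]) Ha.
  have [_ _ Hy _] := bwf_cat3P (x := [:: (i.+1, true); (i, true); (i.+1, true)]) Hb.
  have := keq_winv_context n0 Hx Hy (keq_relator n0 Hx Hy (fun u v => ms_braid n u v i)).
  by rewrite /bmirror /= !map_cat; apply; rewrite wf_word_flip.
- move=> _ _ Ha' Hb'; apply: keq_step Ha' Hb' _.
  by rewrite /bmirror /= !map_cat; exact: ms_conj.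
- move=> _ _ Ha' Hb'; apply: keq_step Ha' Hb' _.
  by rewrite /bmirror /= map_rcons; exact: ms_stab.
Qed.

Lemma mstep_rev a b : bwf a -> bwf b -> mstep a b -> keq (brev a) (brev b).
Proof.
move=> Ha Hb step; have Ha' := bwf_rev Ha; have Hb' := bwf_rev Hb.
case: a b / step Ha Hb Ha' Hb'
  => [n u v i s | n u v i j Hij | n u v i | n u v | n w s n0] _ _ Ha' Hb'.
- apply: keq_step Ha' Hb' _; rewrite /brev /= !rev_cat !rev_cons -!cats1 -!catA /=.
  by have := ms_cancel n (rev v) (rev u) i (~~ s); rewrite negbK.
- apply/keq_sym/(keq_step Hb' Ha'); rewrite /brev /= !rev_cat !rev_cons -!cats1 -!catA /=.
  exact: ms_comm.
- apply: keq_step Ha' Hb' _; rewrite /brev /= !rev_cat !rev_cons -!cats1 -!catA /=.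
  exact: ms_braid.
- by apply: keq_step Ha' Hb' _; rewrite /brev /= !rev_cat; exact: ms_conj.
- move: Hb'; rewrite /brev /= rev_rcons => Hb'.
  have Hs : bwf (n.+1, rcons (rev w) (n.-1, s)).
    by case: Hb' => /= ? /andP [? ?]; split; rewrite //= all_rcons; apply/andP.
  apply: keq_trans (keq_step Ha' Hs (ms_stab _ _ n0)) (keq_step Hs Hb' _).
  by rewrite -cats1; exact: (ms_conj _ _ [:: _]).
Qed.

Lemma keq_mirror a b : keq a b -> keq (bmirror a) (bmirror b).
Proof.
elim=> [x | x y _ IH | x y z _ IH1 _ IH2 | x y Hx Hy xy].
- exact: keq_refl.
- exact: keq_sym IH.
- exact: keq_trans IH1 IH2.
- exact: mstep_mirror Hx Hy xy.
Qed.

Lemma keq_rev a b : keq a b -> keq (brev a) (brev b).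
Proof.
elim=> [x | x y _ IH | x y z _ IH1 _ IH2 | x y Hx Hy xy].
- exact: keq_refl.
- exact: keq_sym IH.
- exact: keq_trans IH1 IH2.
- exact: mstep_rev Hx Hy xy.
Qed.

Lemma brevK : involutive brev.
Proof. by case=> n w; rewrite /brev /= revK. Qed.

Lemma bmirrorK : involutive bmirror.
Proof.
case=> n w; rewrite /bmirror /= -map_comp; congr pair.
by elim: w => //= [[i s]] w ->; rewrite negbK.
Qed.

Lemma brev_mirror b : brev (bmirror b) = bmirror (brev b).
Proof. by case: b => n w; rewrite /brev /bmirror /= map_rev. Qed.

Definition gmul (a b : gsym) : gsym :=
  match a, b with
  | gId, c | c, gId => c
  | gR, gR | gM, gM | gRM, gRM => gId
  | gR, gM | gM, gR => gRM
  | gR, gRM | gRM, gR => gM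
  | gM, gRM | gRM, gM => gR
  end.

Lemma gmulC : commutative gmul.
Proof. by case; case. Qed.

Lemma gmulK a : cancel (gmul a) (gmul a).
Proof. by case: a; case. Qed.

Lemma gact_mul a b x : gact (gmul a b) x = gact a (gact b x).
Proof. by case: a; case: b; rewrite /= ?brev_mirror ?brevK ?bmirrorK ?brev_mirror. Qed.

Lemma gact_invol g : involutive (gact g).
Proof. by move=> x; rewrite -gact_mul; case: g. Qed.

Lemma gact_comm a b x : gact a (gact b x) = gact b (gact a x).
Proof. by rewrite -!gact_mul gmulC. Qed.

Lemma keq_gact g a b : keq a b -> keq (gact g a) (gact g b).
Proof.
by case: g => //= ab; [exact: keq_rev | exact: keq_mirror | exact/keq_rev/keq_mirror].
Qed.

Definition mirrors (g : gsym) : bool := match g with gR | gM => true | _ => false end.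

Lemma mirrors_mul a b : mirrors (gmul a b) = mirrors a (+) mirrors b.
Proof. by case: a; case: b. Qed.

Section ColoringVector.
Variable S : seq fquandle.

Lemma colvec_keq a b : keq a b -> colvec S a = colvec S b.
Proof. by move=> ab; apply: eq_map => Q; exact: col_keq. Qed.

Lemma colvec_rev_mirror b : colvec S (brev (bmirror b)) = colvec S b.
Proof. by case: b => n w; apply: eq_map => Q; exact: col_winv. Qed.

Lemma colvec_gact g k : colvec S (gact g k) = colvec S (if mirrors g then bmirror k else k).
Proof. by case: g => //=; [rewrite -{1}(bmirrorK k) | ]; rewrite colvec_rev_mirror. Qed.

Lemma colvec_mirror_of_gact g g' k : mirrors (gmul g g') ->
  colvec S (gact g k) = colvec S (gact g' k) -> colvec S (bmirror k) = colvec S k.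
Proof.
by rewrite mirrors_mul !colvec_gact; case: (mirrors g); case: (mirrors g') => // _ ->.
Qed.

End ColoringVector.

Definition in_orbit (X K : braid) : Prop := exists g, keq X (gact g K).

Lemma in_orbit_keq X K L : keq K L -> in_orbit X K -> in_orbit X L.
Proof. by move=> KL [g XK]; exists g; apply: keq_trans XK (keq_gact g KL). Qed.

Lemma in_orbit_gact X g K : in_orbit X K <-> in_orbit X (gact g K).
Proof.
split=> [] [h XK]; exists (gmul h g); rewrite gact_mul //.
by rewrite gact_invol.
Qed.

Lemma same_orbit_gact K K' k g g' :
  keq K (gact g k) -> keq K' (gact g' k) -> same_orbit K K'.
Proof.
have orbit_sub L L' h h' : keq L (gact h k) -> keq L' (gact h' k) ->
    forall X, in_orbit X L -> in_orbit X L'.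
  move=> Lk L'k X /(in_orbit_keq Lk) /(in_orbit_gact X h k).2 /(in_orbit_gact X h' k).1.
  exact/in_orbit_keq/keq_sym.
by move=> Kk K'k X; split; [exact: orbit_sub Kk K'k X | exact: orbit_sub K'k Kk X].
Qed.

Lemma keq_rev_or_mirror k :
  ~ (chiral k \/ neg_amphicheiral k) -> keq k (brev k) \/ keq k (bmirror k).
Proof.
move=> not_chiral; apply: NNPP => /not_or_and [not_r not_m].
by apply: not_chiral; case: (classic (keq k (brev (bmirror k)))); [right | left].
Qed.

Lemma keq_gact_self_or_rm k d : (mirrors d -> keq k (brev k) \/ keq k (bmirror k)) ->
  keq (gact d k) k \/ keq (gact d k) (gact gRM k).
Proof.
case: d => /= [_ | /(_ isT) [kr | km] | /(_ isT) [kr | km] | _].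
- by left; exact: keq_refl.
- by left; exact: keq_sym.
- by right; exact: keq_rev.
- by right; rewrite brev_mirror; exact: keq_mirror.
- by left; exact: keq_sym.
- by right; exact: keq_refl.
Qed.

Lemma keq_self_or_rm_of_gact K K' k g g' :
  keq K (gact g k) -> keq K' (gact g' k) ->
  keq (gact (gmul g g') k) k \/ keq (gact (gmul g g') k) (gact gRM k) ->
  keq K' K \/ keq K' (brev (bmirror K)).
Proof.
move=> Kk K'k; have K'dk : keq K' (gact g (gact (gmul g g') k)) by rewrite -gact_mul gmulK.
case=> dk; [left | right]; apply: keq_trans K'dk (keq_trans (keq_gact g dk) _).
  exact: keq_sym.
by rewrite gact_comm; exact: (keq_gact gRM (keq_sym Kk)).
Qed.

Section Representatives.
Variables (Ks Rs : seq braid) (S : seq fquandle).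
Hypothesis reps_cover : forall K, inK Ks K -> exists k g, k \in Rs /\ keq K (gact g k).
Hypothesis sepA : forall k k', k \in Rs -> k' \in Rs -> ~ keq k k' -> ~ csim S k k'.
Hypothesis sepB :
  forall k k', k \in Rs -> k' \in Rs -> ~ keq k k' -> ~ csim S k (bmirror k').
Hypothesis sepC :
  forall k k', k \in Rs -> k' \in Rs -> ~ keq k k' -> ~ csim S (bmirror k) (bmirror k').

Lemma rep_keq_of_colvec k k' g g' : k \in Rs -> k' \in Rs ->
  colvec S (gact g k) = colvec S (gact g' k') -> keq k k'.
Proof.
move=> Rk Rk' E; apply: NNPP => not_kk'.
have not_k'k : ~ keq k' k by move/keq_sym.
move: E; rewrite !colvec_gact; case: (mirrors g); case: (mirrors g') => E.
- exact: sepC not_kk' E.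
- exact: sepB not_k'k (esym E).
- exact: sepB not_kk' E.
- exact: sepA not_kk' E.
Qed.

Lemma csim_common_rep K K' : inK Ks K -> inK Ks K' -> csim S K K' ->
  exists k g g', [/\ k \in Rs, keq K (gact g k) & keq K' (gact g' k)].
Proof.
move=> /reps_cover [k [g [Rk Kk]]] /reps_cover [k' [g' [Rk' K'k']]] KK'.
have kk' : keq k k'.
  apply: (rep_keq_of_colvec (g := g) (g' := g') Rk Rk').
  by rewrite -(colvec_keq S Kk) -(colvec_keq S K'k').
by exists k, g, g'; split=> //; apply: keq_trans K'k' (keq_gact g' (keq_sym kk')).
Qed.

End Representatives.

Theorem proposition3p7 (Ks Rs : seq braid) (S : seq fquandle) :
  G_closed_knot_set Ks -> orbit_reps Ks Rs ->
  (forall k k', k \in Rs -> k' \in Rs -> ~ keq k k' -> ~ csim S k k') ->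
  (forall k k', k \in Rs -> k' \in Rs -> ~ keq k k' -> ~ csim S k (bmirror k')) ->
  (forall k k', k \in Rs -> k' \in Rs -> ~ keq k k' -> ~ csim S (bmirror k) (bmirror k')) ->
  (forall K K', inK Ks K -> inK Ks K' -> csim S K K' -> same_orbit K K') /\
  ((forall k, k \in Rs -> chiral k \/ neg_amphicheiral k -> ~ csim S (bmirror k) k) ->
   forall K K', inK Ks K -> inK Ks K' -> csim S K K' ->
     keq K' K \/ keq K' (brev (bmirror K))).
Proof.
move=> _ [_ [cover _]] sepA sepB sepC.
have common := csim_common_rep cover sepA sepB sepC.
split=> [K K' HK HK' KK' | sepD K K' HK HK' KK'];
  have [k [g [g' [Rk Kk K'k]]]] := common K K' HK HK' KK'.
  exact: same_orbit_gact Kk K'k.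
have E : colvec S (gact g k) = colvec S (gact g' k).
  by rewrite -(colvec_keq S Kk) -(colvec_keq S K'k).
apply: (keq_self_or_rm_of_gact Kk K'k); apply: keq_gact_self_or_rm => Md.
apply: keq_rev_or_mirror => /(sepD k Rk); apply.
exact: colvec_mirror_of_gact Md E.
Qed.
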